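(* Let $1\le k\le n$ and $\rho=\sum_{i=0}^k\lambda_i|D_n^i\rangle\langle D_n^i|$ with $\lambda_i\ge0$, $\sum_{i=0}^k\lambda_i=1$. If there exists $i_*\in\{0,\dots,k\}$ such that $k-i_*$ is even and $\lambda_{i_*}=0$, then $L(\rho)\le k$.
   Context: Dicke states: $|D_n^i\rangle=\binom{n}{i}^{-1/2}\sum_{s\in\{0,1\}^n,\ \sum_js_j=i}|s_1\rangle\otimes\cdots\otimes|s_n\rangle$. For $S\subseteq[n]$, $\rho_S$ is the partial trace of $\rho$ over qubits outside $S$; $\mathcal C(\rho,\mathcal S)=\{\sigma\text{ density matrix}:\sigma_S=\rho_S\ \forall S\in\mathcal S\}$; $\mathcal S$ determines $\rho$ if $\mathcal C(\rho,\mathcal S)=\{\rho\}$; $L(\rho)=\min_{\mathcal S\text{ determines }\rho}\max_{S\in\mathcal S}|S|$. *)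

(* Scalars: an arbitrary numClosedFieldType C (e.g. algC, or
   complex R); "x >= 0" in C means x is real and nonnegative. *)
From mathcomp Require Import all_boot all_order all_algebra.
From mathcomp Require Import boolp.
Set Implicit Arguments. Unset Strict Implicit. Unset Printing Implicit Defensive.
Import Order.TTheory GRing.Theory Num.Theory.
Local Open Scope ring_scope.

(* computational basis of n qubits: bitstrings s = (s_1,...,s_n) *)
Definition bits (n : nat) := {ffun 'I_n -> bool}.

(* operators on (C^2)^{\otimes n}, given by their matrix entries <s|M|t> *)
Definition op (C : numClosedFieldType) (n : nat) := bits n -> bits n -> C.

Definition weight n (s : bits n) : nat := #|[set j | s j]|.

Definition dicke (C : numClosedFieldType) (n i : nat) (s : bits n) : C :=
  if weight s == i then (sqrtC ('C(n, i)%:R : C))^-1 else 0.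

Definition proj (C : numClosedFieldType) n (psi : bits n -> C) : op C n :=
  fun s t => psi s * (psi t)^*.

Definition dicke_mix (C : numClosedFieldType) (n k : nat) (lam : nat -> C) : op C n :=
  fun s t => \sum_(i < k.+1) lam i * proj (@dicke C n i) s t.

Definition density (C : numClosedFieldType) n (M : op C n) : Prop :=
  [/\ (forall s t, M t s = (M s t)^*),
      (forall v : bits n -> C, 0 <= \sum_s \sum_t (v s)^* * M s t * v t)
    & \sum_s M s s = 1].

Definition merge n (S : {set 'I_n}) (s c : bits n) : bits n :=
  [ffun j => if j \in S then s j else c j].

(* The reduced operator rho_S acts on
   the qubits in S; its entry <a|rho_S|b> (a, b assignments of the qubits in S)
   is recorded as  ptrace S M s t  for any s, t restricting to a, b on S
   (the value only depends on the restrictions).  The sum runs over all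
   assignments c of the qubits outside S (c normalized to false on S). *)
Definition ptrace (C : numClosedFieldType) n (S : {set 'I_n}) (M : op C n) : op C n :=
  fun s t => \sum_(c : bits n | [forall j in S, c j == false])
               M (merge S s c) (merge S t c).

Definition determines (C : numClosedFieldType) n (rho : op C n)
  (F : {set {set 'I_n}}) : Prop :=
  forall sigma : op C n, density sigma ->
    (forall S, S \in F -> forall s t, ptrace S sigma s t = ptrace S rho s t) ->
    forall s t, sigma s t = rho s t.

(* L(rho) = min over determining families F of max_{S in F} |S|.
   The default value n of the min is never reached: the family {[n]} always
   determines rho. *)
Definition L (C : numClosedFieldType) n (rho : op C n) : nat :=
  \big[minn/n]_(F : {set {set 'I_n}} | `[< determines rho F >])
     \max_(S in F) #|S|.

From Pilot Require Import Defs.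
From mathcomp Require Import all_boot all_order all_algebra all_fingroup.
From mathcomp Require Import boolp ring zify.
Set Implicit Arguments. Unset Strict Implicit. Unset Printing Implicit Defensive.
Import Order.TTheory GRing.Theory Num.Theory.
Local Open Scope ring_scope.
Local Notation merge := Defs.merge.

(* Let sigma be a state with the same marginals as rho on all sets of at most
   k qubits.  For f(m) = sum_(j <= k) c_j C(m, j), the diagonal functional
   sum_w f(|w|) sigma_ww is a combination of traces of marginals, so it takes
   the same value on sigma and on rho.  With c_j = (-1)^(j - i) C(j, i) one
   gets f(m) = C(m, i) (-1)^(k - i) C(m - i - 1, k - i) for m > i, so f vanishes
   on {0..k} \ {i}, f(i) = 1, and f > 0 beyond k because k - i is even.  As
   lambda_i = 0 the functional vanishes on rho, hence sigma carries no weight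
   on strings of weight i or > k, and by positivity the corresponding rows and
   columns of sigma vanish.  The two-qubit marginals then force sigma to
   commute with every transposition of qubits, so sigma_st only depends on
   (|s|, |t|); these values are read off the marginal on the first
   max(|s|, |t|) qubits, by downward induction on |s|. *)

Definition alt_bin_sum (N r : nat) : int := \sum_(l < r.+1) (-1) ^+ l * 'C(N, l)%:Z.

Lemma alt_bin_sum0 r : alt_bin_sum 0 r = 1.
Proof.
rewrite /alt_bin_sum big_ord_recl /= expr0 mul1r bin0 big1 ?addr0 // => l _.
by rewrite bin0n mulr0.
Qed.

Lemma alt_bin_sumS N r : alt_bin_sum N.+1 r = (-1) ^+ r * 'C(N, r)%:Z.
Proof.
elim: r => [|r IHr]; first by rewrite /alt_bin_sum big_ord1 /= !expr0 !bin0.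
by rewrite /alt_bin_sum big_ord_recr /= -/(alt_bin_sum N.+1 r) IHr binS PoszD exprS; ring.
Qed.

Lemma mul_bin_sub i j m : (i <= j)%N -> ('C(j, i) * 'C(m, j) = 'C(m, i) * 'C(m - i, j - i))%N.
Proof.
move=> le_ij; have [le_jm | lt_mj] := leqP j m; last first.
  rewrite (bin_small lt_mj) muln0; have [le_im | lt_mi] := leqP i m.
    by rewrite (@bin_small (m - i)) ?muln0 //; lia.
  by rewrite (bin_small lt_mi).
have le_im : (i <= m)%N by lia.
have le_sub : (j - i <= m - i)%N by lia.
have := bin_fact le_sub; rewrite (_ : m - i - (j - i) = m - j)%N; last by lia.
move=> fact_sub; apply/eqP.
rewrite -(eqn_pmul2r (_ : 0 < i`! * (j - i)`! * (m - j)`!)%N) ?muln_gt0 ?fact_gt0 //.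
apply/eqP; transitivity m`!; first by rewrite -(bin_fact le_jm) -(bin_fact le_ij); ring.
by rewrite -(bin_fact le_im) -fact_sub; ring.
Qed.

Section SeparatingPolynomial.
Variables i k : nat.

Definition sep_coef (j : nat) : int :=
  if (i <= j)%N then (-1) ^+ (j - i) * 'C(j, i)%:Z else 0.

Definition sep_poly (m : nat) : int := \sum_(j < k.+1) sep_coef j * 'C(m, j)%:Z.

Hypothesis le_ik : (i <= k)%N.

Lemma sep_polyE m : sep_poly m = 'C(m, i)%:Z * alt_bin_sum (m - i) (k - i).
Proof.
rewrite /sep_poly -(big_mkord xpredT (fun j => sep_coef j * 'C(m, j)%:Z)).
rewrite (big_cat_nat (n := i)) //=; last by lia.
rewrite big_nat_cond big1 ?add0r; last first.
  by move=> j /andP[/andP[_ lt_ji] _]; rewrite /sep_coef leqNgt lt_ji mul0r.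
rewrite -{1}[i]add0n big_addn (_ : k.+1 - i = (k - i).+1)%N; last by lia.
rewrite big_mkord /alt_bin_sum big_distrr /=; apply: eq_bigr => l _.
rewrite /sep_coef leq_addl addnK -mulrA -PoszM mul_bin_sub ?leq_addl // addnK PoszM.
ring.
Qed.

Lemma sep_poly_id : sep_poly i = 1.
Proof. by rewrite sep_polyE subnn alt_bin_sum0 binn mulr1. Qed.

Lemma sep_poly_eq0 m : (m <= k)%N -> m != i -> sep_poly m = 0.
Proof.
move=> le_mk ne_mi; rewrite sep_polyE; have [lt_mi | le_im] := ltnP m i.
  by rewrite bin_small // mul0r.
rewrite (_ : m - i = (m - i).-1.+1)%N; last by lia.
by rewrite alt_bin_sumS (@bin_small (m - i).-1) ?mulr0 //; lia.
Qed.

Hypothesis even_ki : ~~ odd (k - i).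

Lemma sep_poly_gt0 m : (k < m)%N -> 0 < sep_poly m.
Proof.
move=> lt_km; rewrite sep_polyE (_ : m - i = (m - i).-1.+1)%N; last by lia.
rewrite alt_bin_sumS -signr_odd (negbTE even_ki) expr0 mul1r -PoszM ltz_nat.
by rewrite muln_gt0 !bin_gt0; apply/andP; split; lia.
Qed.

Lemma sep_poly_ge0 m : 0 <= sep_poly m.
Proof.
have [/sep_poly_gt0/ltW // | le_mk] := ltnP k m.
by have [->|ne_mi] := eqVneq m i; rewrite ?sep_poly_id ?sep_poly_eq0.
Qed.

End SeparatingPolynomial.

Section Bitstrings.
Variable n : nat.
Implicit Types (S : {set 'I_n}) (s u w c p : bits n).

Lemma weight_le w : (weight w <= n)%N.
Proof. by rewrite /weight (leq_trans (max_card _)) ?card_ord. Qed.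

Lemma weight_eq0 w : weight w = 0%N -> w = [ffun => false].
Proof.
move/eqP; rewrite /weight cards_eq0 => /eqP w0; apply/ffunP => j.
by rewrite ffunE; apply/negbTE; apply: contraFN (in_set0 j); rewrite -w0 inE.
Qed.

Lemma weight_merge S u c : (forall j, u j -> j \in S) ->
  [forall j in S, c j == false] -> weight (merge S u c) = (weight u + weight c)%N.
Proof.
move=> uS /forall_inP c0; rewrite /weight -cardsUI.
have -> : [set j | u j] :&: [set j | c j] = set0.
  apply/setP => j; rewrite !inE; apply/negbTE/nandP.
  by case: (boolP (u j)) => [/uS/c0/eqP->|]; [right|left].
rewrite cards0 addn0; apply: eq_card => j; rewrite !inE ffunE.
case: (boolP (j \in S)) => jS; first by rewrite (eqP (c0 j jS)) orbF.
by case: (boolP (u j)) => // /uS; rewrite (negbTE jS).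
Qed.

Lemma big_merge (R : zmodType) S s (F : bits n -> R) :
  \sum_(c : bits n | [forall j in S, c j == false]) F (merge S s c) =
  \sum_(w : bits n | [forall j in S, w j == s j]) F w.
Proof.
pose strip w : bits n := [ffun j => if j \in S then false else w j].
rewrite [RHS](reindex_onto (merge S s) strip); last first.
  move=> w /forall_inP ws; apply/ffunP => j; rewrite !ffunE.
  by case: (boolP (j \in S)) => jS //; rewrite (eqP (ws j jS)).
apply: eq_bigl => c; apply/idP/andP => [/forall_inP c0 | [_ /eqP <-]].
  split; first by apply/forall_inP => j jS; rewrite ffunE jS.
  apply/eqP/ffunP => j; rewrite !ffunE; case: (boolP (j \in S)) => jS //.
  by rewrite (eqP (c0 j jS)).
by apply/forall_inP => j jS; rewrite ffunE jS.
Qed.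

Lemma partition_big_merge (R : zmodType) S (F : bits n -> R) :
  \sum_(w : bits n) F w =
  \sum_(p : bits n | [forall j, (j \notin S) ==> ~~ p j])
    \sum_(c : bits n | [forall j in S, c j == false]) F (merge S p c).
Proof.
pose restr w : bits n := [ffun j => (j \in S) && w j].
rewrite (partition_big restr (fun p => [forall j, (j \notin S) ==> ~~ p j])); last first.
  by move=> w _; apply/forallP => j; rewrite ffunE; case: (j \in S).
apply: eq_bigr => p /forallP pS; rewrite big_merge; apply: eq_bigl => w /=.
apply/eqP/forall_inP => [<- j jS | wp]; first by rewrite ffunE jS.
apply/ffunP => j; rewrite ffunE; case: (boolP (j \in S)) => jS /=.
  by rewrite (eqP (wp j jS)).
by have := pS j; rewrite jS => /negbTE.
Qed.

Definition swap_bits (i j : 'I_n) w : bits n := [ffun l => w (tperm i j l)].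

Lemma swap_bitsK i j : involutive (swap_bits i j).
Proof. by move=> w; apply/ffunP => l; rewrite !ffunE tpermK. Qed.

Lemma weight_swap i j w : weight (swap_bits i j w) = weight w.
Proof.
rewrite /weight (_ : [set l | _] = tperm i j @^-1: [set l | w l]).
  exact/card_preimset/perm_inj.
by apply/setP => l; rewrite !inE ffunE.
Qed.

Lemma merge_swap i j S p c : i \in S -> j \in S ->
  merge S (swap_bits i j p) c = swap_bits i j (merge S p c).
Proof.
move=> iS jS; apply/ffunP => l; rewrite !ffunE.
case: (boolP (l \in S)) => lS; first by case: tpermP => [|| _ _]; rewrite ?iS ?jS ?lS.
by case: tpermP => [eli|elj|_ _]; rewrite ?(negbTE lS) //; move: lS; rewrite ?eli ?elj ?iS ?jS.
Qed.

(* Induction on the number of positions where u and u' differ: a suitable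
   transposition repairs one of them and breaks none. *)
Lemma swap_invariant_weight (T : Type) (g : bits n -> T) :
  (forall i j w, g (swap_bits i j w) = g w) ->
  forall u u', weight u = weight u' -> g u = g u'.
Proof.
move=> g_swap u u'; move: {2}#|_| (leqnn #|[set l | u l != u' l]|) => d.
elim: d u => [|d IHd] u le_diff w_uu'.
  congr g; apply/ffunP => l; apply/eqP/negbNE; apply: contraTN le_diff => ne_l.
  by rewrite -ltnNge card_gt0; apply/set0Pn; exists l; rewrite inE.
have [-> // | ne_uu'] := eqVneq u u'.
have ne_AB : [set l | u l] != [set l | u' l].
  apply: contra_neq ne_uu' => /setP eqAB; apply/ffunP => l.
  by have := eqAB l; rewrite !inE.
have [l1 ul1 u'l1] : exists2 l, u l & ~~ u' l.
  have /subsetPn[l] : ~~ ([set l | u l] \subset [set l | u' l]).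
    apply: contra ne_AB => sub; rewrite eqEcard sub /=.
    by move: w_uu'; rewrite /weight => ->.
  by rewrite !inE; exists l.
have [l2 u'l2 ul2] : exists2 l, u' l & ~~ u l.
  have /subsetPn[l] : ~~ ([set l | u' l] \subset [set l | u l]).
    apply: contra ne_AB => sub; rewrite eq_sym eqEcard sub /=.
    by move: w_uu'; rewrite /weight => <-.
  by rewrite !inE; exists l.
rewrite -(g_swap l1 l2 u); apply: IHd; last by rewrite weight_swap.
set D := [set l | u l != u' l] in le_diff.
have sub : [set l | swap_bits l1 l2 u l != u' l] \subset D :\ l1.
  apply/subsetP => l; rewrite !inE ffunE.
  have [-> | ne1] := eqVneq l l1; first by rewrite tpermL (negbTE ul2) (negbTE u'l1).
  have [-> | ne2] := eqVneq l l2; first by rewrite tpermR ul1 u'l2.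
  by rewrite tpermD // eq_sym.
apply: leq_trans (subset_leq_card sub) _.
by move: le_diff; rewrite (cardsD1 l1 D) inE ul1 (negbTE u'l1).
Qed.

Definition prefix_bits (a : nat) : bits n := [ffun l : 'I_n => (l < a)%N].

Lemma card_prefix a : (a <= n)%N -> #|[set l : 'I_n | (l < a)%N]| = a.
Proof.
move=> le_an; rewrite (_ : [set l | _] = widen_ord le_an @: [set: 'I_a]).
  by rewrite card_imset ?cardsT ?card_ord // => x y /(congr1 val) /= /val_inj.
apply/setP => l; rewrite inE; apply/idP/imsetP => [lt_la | [x _ ->]].
  by exists (Ordinal lt_la) => //; apply: val_inj.
exact: ltn_ord x.
Qed.

Lemma weight_prefix a : (a <= n)%N -> weight (prefix_bits a) = a.
Proof.
move=> le_an; rewrite -[RHS](card_prefix le_an).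
by apply: eq_card => l; rewrite !inE ffunE.
Qed.

Lemma merge_prefix a b : (a <= b)%N ->
  merge [set l : 'I_n | (l < b)%N] (prefix_bits a) [ffun => false] = prefix_bits a.
Proof.
move=> le_ab; apply/ffunP => l; rewrite !ffunE inE.
by case: ltnP => // le_bl; apply/esym/negbTE; rewrite -leqNgt (leq_trans le_ab).
Qed.

End Bitstrings.

Section QuadraticForm.
Variables (C : numClosedFieldType) (n : nat) (M : op C n).
Implicit Types (s t u : bits n) (v w : bits n -> C).

Definition qform v w := \sum_s \sum_t (v s)^* * M s t * w t.

Definition basis u : bits n -> C := fun x => (x == u)%:R.

Lemma sum_basis_l u (F : bits n -> C) : \sum_x basis u x * F x = F u.
Proof.
rewrite (bigD1 u) //= /basis eqxx mul1r big1 ?addr0 // => x /negbTE->.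
by rewrite mul0r.
Qed.

Lemma sum_basis_r u (F : bits n -> C) : \sum_x F x * basis u x = F u.
Proof. by under eq_bigr do rewrite mulrC; exact: sum_basis_l. Qed.

Lemma qform_basis_l u w : qform (basis u) w = \sum_t M u t * w t.
Proof.
rewrite /qform (bigD1 u) //= [X in _ + X]big1 ?addr0.
  by apply: eq_bigr => t _; rewrite /basis eqxx rmorph1 mul1r.
by move=> s /negbTE ne_su; apply: big1 => t _; rewrite /basis ne_su rmorph0 !mul0r.
Qed.

Lemma qform_basis_r v u : qform v (basis u) = \sum_s (v s)^* * M s u.
Proof. by apply: eq_bigr => s _; rewrite sum_basis_r. Qed.

Lemma qform_basis u u' : qform (basis u) (basis u') = M u u'.
Proof. by rewrite qform_basis_l sum_basis_r. Qed.

Lemma qform_comb a b v w :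
  qform (fun x => a * v x + b * w x) (fun x => a * v x + b * w x) =
  a^* * a * qform v v + a^* * b * qform v w + b^* * a * qform w v + b^* * b * qform w w.
Proof.
rewrite /qform !big_distrr -!big_split /=; apply: eq_bigr => s _.
rewrite !big_distrr -!big_split /=; apply: eq_bigr => t _.
by rewrite !rmorphD !rmorphM /=; ring.
Qed.

Hypothesis M_herm : forall s t, M t s = (M s t)^*.
Hypothesis M_psd : forall v, 0 <= qform v v.

Lemma psd_diag_ge0 u : 0 <= M u u.
Proof. by rewrite -qform_basis. Qed.

(* Test positivity on (a + 1) w - z e_s with z = (M w)_s and a = M_ss. *)
Lemma psd_isotropic_ker w : qform w w = 0 -> forall s, \sum_t M s t * w t = 0.
Proof.
move=> ww0 s; set z := \sum_t _; set a := M s s.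
have a_ge0 : 0 <= a := psd_diag_ge0 s.
have conj_a : a^* = a by rewrite conj_Creal // ger0_real.
have qw_s : qform w (basis s) = z^*.
  rewrite qform_basis_r rmorph_sum; apply: eq_bigr => t _.
  by rewrite rmorphM /= -M_herm mulrC.
have := M_psd (fun x => (a + 1) * w x + (- z) * basis s x).
rewrite qform_comb ww0 qw_s qform_basis_l -/z qform_basis rmorphD /= conj_a rmorph1 rmorphN /=.
rewrite -/a (_ : _ + _ = - ((a + 2) * (z * z^*))); last by ring.
rewrite -normCK oppr_ge0 pmulr_rle0 ?ltr_wpDl // => z2_le0.
by apply/eqP; rewrite -normr_eq0 -sqrf_eq0 eq_le z2_le0 exprn_ge0.
Qed.

End QuadraticForm.

Section DickeMixture.
Variables (C : numClosedFieldType) (n k : nat) (lam : nat -> C).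
Local Notation rho := (@dicke_mix C n k lam).
Implicit Types u v : bits n.

Lemma dicke_mixE u v : rho u v =
  if (weight u == weight v) && (weight u <= k)%N then
    lam (weight u) / 'C(n, weight u)%:R
  else 0.
Proof.
rewrite /dicke_mix /proj /dicke; have [le_uk | lt_ku] := leqP (weight u) k; last first.
  rewrite andbF; apply: big1 => i _.
  by rewrite (_ : weight u == i = false) ?mul0r ?mulr0 //; have := ltn_ord i; lia.
rewrite andbT (bigD1 (Ordinal (le_uk : (weight u < k.+1)%N))) //= eqxx.
rewrite big1 ?addr0 => [|i ne_i]; last first.
  by rewrite (_ : weight u == i = false) ?mul0r ?mulr0 //; apply/negbTE;
    apply: contra ne_i => /eqP e; apply/eqP/val_inj.
have [->|_] := eqVneq (weight u) (weight v); rewrite ?eqxx ?conjC0 ?mulr0 //.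
by rewrite conj_Creal ?ger0_real ?invr_ge0 ?sqrtC_ge0 ?ler0n // -expr2 exprVn sqrtCK.
Qed.

Lemma dicke_mix_eq0 u v : (k < weight u)%N || (k < weight v)%N -> rho u v = 0.
Proof.
rewrite dicke_mixE => big; case: ifP => // /andP[/eqP wuv le_uk].
by move: big; rewrite -wuv ltnNge le_uk.
Qed.

Lemma dicke_mix_weight u v u' v' :
  weight u = weight u' -> weight v = weight v' -> rho u v = rho u' v'.
Proof. by rewrite !dicke_mixE => -> ->. Qed.

End DickeMixture.

Section PartialTrace.
Variables (C : numClosedFieldType) (n : nat).
Implicit Type M : op C n.

Lemma ptrace_set0 M s : ptrace set0 M s s = \sum_c M c c.
Proof.
apply: eq_big => [c|c _]; first by apply/forall_inP => j; rewrite inE.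
by congr (M _ _); apply/ffunP => j; rewrite ffunE inE.
Qed.

Definition ones : bits n := [ffun => true].

Lemma ptrace_ones M T :
  ptrace T M ones ones = \sum_(w : bits n | T \subset [set l | w l]) M w w.
Proof.
rewrite /ptrace (big_merge T ones (fun x => M x x)); apply: eq_bigl => w.
by apply/forall_inP/subsetP => wT j /wT; rewrite !inE ffunE // => /eqP.
Qed.

(* Double counting of the pairs (T, w) with T a j-subset of the support of w. *)
Lemma sum_bin_weight M j :
  \sum_w 'C(weight w, j)%:R * M w w =
  \sum_(T : {set 'I_n} | #|T| == j) ptrace T M ones ones.
Proof.
under [RHS]eq_bigr do rewrite ptrace_ones.
rewrite [RHS](exchange_big_dep xpredT) //=; apply: eq_bigr => w _.
rewrite (eq_bigl [in [set T : {set 'I_n} | T \subset [set l | w l] & #|T| == j]]);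
  last by move=> T; rewrite !inE andbC.
by rewrite sumr_const cards_draws mulr_natl.
Qed.

Lemma sum_sep_poly_ptrace i k M :
  \sum_w (sep_poly i k (weight w))%:~R * M w w =
  \sum_(j < k.+1) (sep_coef i j)%:~R *
    \sum_(T : {set 'I_n} | #|T| == j) ptrace T M ones ones.
Proof.
under eq_bigr do rewrite /sep_poly rmorph_sum big_distrl /=.
rewrite exchange_big /=; apply: eq_bigr => j _.
rewrite -sum_bin_weight big_distrr /=; apply: eq_bigr => w _.
by rewrite rmorphM /= mulrA.
Qed.

Lemma sum_swap_ptrace (i j : 'I_n) M :
  \sum_u M (swap_bits i j u) u =
  \sum_(p : bits n | [forall l, (l \notin [set i; j]) ==> ~~ p l])
     ptrace [set i; j] M (swap_bits i j p) p.
Proof.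
rewrite (partition_big_merge [set i; j] (fun u => M (swap_bits i j u) u)).
by apply: eq_bigr => p _; apply: eq_bigr => c _; rewrite merge_swap // !inE eqxx ?orbT.
Qed.

End PartialTrace.

Section Determination.
Variables (C : numClosedFieldType) (n k : nat) (lam : nat -> C) (i0 : nat).
Hypotheses (k_gt0 : (0 < k)%N) (le_i0k : (i0 <= k)%N)
  (even_ki0 : ~~ odd (k - i0)) (lam_i0 : lam i0 = 0).
Local Notation rho := (@dicke_mix C n k lam).
Variable sig : op C n.
Hypotheses (sig_herm : forall s t, sig t s = (sig s t)^*)
  (sig_psd : forall v, 0 <= qform sig v v)
  (sig_marg : forall S : {set 'I_n}, (#|S| <= k)%N ->
     forall s t, ptrace S sig s t = ptrace S rho s t).

Definition forbidden (w : bits n) := (k < weight w)%N || (weight w == i0).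

Lemma sig_diag_forbidden w : forbidden w -> sig w w = 0.
Proof.
move=> fw.
have sum_sig : \sum_x (sep_poly i0 k (weight x))%:~R * sig x x = 0.
  transitivity (\sum_x (sep_poly i0 k (weight x))%:~R * rho x x); last first.
    apply: big1 => x _; have [lt_kx | le_xk] := ltnP k (weight x).
      by rewrite dicke_mix_eq0 ?lt_kx ?mulr0.
    have [x_i0 | ne_i0] := eqVneq (weight x) i0.
      by rewrite dicke_mixE eqxx le_xk x_i0 lam_i0 !mul0r mulr0.
    by rewrite sep_poly_eq0 ?mul0r.
  rewrite !sum_sep_poly_ptrace; apply: eq_bigr => j _; congr (_ * _).
  by apply: eq_bigr => T /eqP cardT; apply: sig_marg; rewrite cardT -ltnS.
have /psumr_eq0P/(_ sum_sig w isT)/eqP :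
    forall x, true -> 0 <= (sep_poly i0 k (weight x))%:~R * sig x x.
  by move=> x _; rewrite mulr_ge0 ?ler0z ?(sep_poly_ge0 le_i0k even_ki0) // psd_diag_ge0.
rewrite mulf_eq0 intr_eq0 => /orP[/eqP f0 | /eqP //].
case/orP: fw => [/(sep_poly_gt0 le_i0k even_ki0) | /eqP w_i0]; first by rewrite f0.
by move: f0; rewrite w_i0 sep_poly_id.
Qed.

Lemma sig_forbidden u : forbidden u -> forall s, sig s u = 0 /\ sig u s = 0.
Proof.
move=> fu s; have su0 : sig s u = 0.
  rewrite -(psd_isotropic_ker sig_herm sig_psd (w := basis C u) _ s) ?sum_basis_r //.
  by rewrite qform_basis sig_diag_forbidden.
by split=> //; rewrite sig_herm su0 conjC0.
Qed.

Lemma trace_sig : \sum_x sig x x = \sum_x rho x x.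
Proof. by rewrite -!(ptrace_set0 _ (ones n)) sig_marg ?cards0. Qed.

(* For k >= 2, the vectors e_x - e_(swap x) are isotropic: their total norm is a
   combination of the trace and of two-qubit marginals, hence as for rho. *)
Lemma sig_swap_r (i j : 'I_n) u s : sig s (swap_bits i j u) = sig s u.
Proof.
have [le_k1 | lt_1k] := leqP k 1.
  have [k1 i01] : k = 1%N /\ i0 = 1%N by move: even_ki0 le_i0k; case: i0; lia.
  have [u0 | nz_u] := eqVneq (weight u) 0%N.
    by rewrite (weight_eq0 u0); congr (sig _ _); apply/ffunP => l; rewrite !ffunE.
  have fu : forbidden u by rewrite /forbidden k1 i01; lia.
  have fu' : forbidden (swap_bits i j u) by rewrite /forbidden weight_swap.
  by rewrite (sig_forbidden fu' s).1 (sig_forbidden fu s).1.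
pose sw := swap_bits i j; pose d x y := 1 * basis C x y + (-1) * basis C (sw x) y.
have swK : involutive sw := swap_bitsK i j.
have sum_d : \sum_x qform sig (d x) (d x) = 0.
  under eq_bigr do rewrite qform_comb !qform_basis rmorph1 rmorphN rmorph1.
  rewrite !big_split /= -!big_distrr /=.
  have sw_diag : \sum_x sig (sw x) (sw x) = \sum_x sig x x.
    by rewrite [RHS](reindex_inj (can_inj swK)).
  have sw_anti : \sum_x sig x (sw x) = \sum_x sig (sw x) x.
    by rewrite (reindex_inj (can_inj swK)); apply: eq_bigr => x _; rewrite swK.
  have sw_marg : \sum_x sig (sw x) x = \sum_x rho (sw x) x.
    rewrite !sum_swap_ptrace; apply: eq_bigr => p _; apply: sig_marg.
    by rewrite cards2; case: (i != j); lia.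
  have rho_sw : \sum_x rho (sw x) x = \sum_x rho x x.
    by apply: eq_bigr => x _; apply: dicke_mix_weight; rewrite ?weight_swap.
  by rewrite sw_diag sw_anti sw_marg trace_sig rho_sw; ring.
have /psumr_eq0P/(_ sum_d u isT) du0 : forall x, true -> 0 <= qform sig (d x) (d x).
  by move=> x _; apply: sig_psd.
have := psd_isotropic_ker sig_herm sig_psd du0 s.
under eq_bigr do rewrite /d mul1r mulN1r mulrDr mulrN.
by rewrite big_split /= sumrN !sum_basis_r => /eqP; rewrite subr_eq0 => /eqP.
Qed.

Lemma sig_swap_l (i j : 'I_n) u s : sig (swap_bits i j u) s = sig u s.
Proof. by rewrite sig_herm sig_swap_r -sig_herm. Qed.

Lemma sig_weight u v u' v' :
  weight u = weight u' -> weight v = weight v' -> sig u v = sig u' v'.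
Proof.
move=> wu wv.
rewrite (swap_invariant_weight (g := fun x : bits n => sig x v)
  (fun i j w => sig_swap_l i j w v) wu).
exact: (swap_invariant_weight (g := sig u') (fun i j w => sig_swap_r i j w u') wv).
Qed.

Lemma sig_eq_rho u v : sig u v = rho u v.
Proof.
apply/eqP; rewrite -subr_eq0; apply/eqP.
move: {2}(k.+1 - weight u)%N (leqnn (k.+1 - weight u)) => d.
elim: d u v => [|d IHd] u v le_d.
  have lt_ku : (k < weight u)%N by lia.
  have fu : forbidden u by rewrite /forbidden lt_ku.
  by rewrite (sig_forbidden fu v).2 dicke_mix_eq0 ?lt_ku ?subr0.
have [lt_kv | le_vk] := ltnP k (weight v).
  have fv : forbidden v by rewrite /forbidden lt_kv.
  by rewrite (sig_forbidden fv u).1 dicke_mix_eq0 ?lt_kv ?orbT ?subr0.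
have [lt_ku | le_uk] := ltnP k (weight u).
  have fu : forbidden u by rewrite /forbidden lt_ku.
  by rewrite (sig_forbidden fu v).2 dicke_mix_eq0 ?lt_ku ?subr0.
set a := weight u; set b := weight v; set T := [set l : 'I_n | (l < maxn a b)%N].
have [le_an le_bn] : (a <= n)%N /\ (b <= n)%N by rewrite !weight_le.
rewrite (sig_weight (u' := prefix_bits n a) (v' := prefix_bits n b)) ?weight_prefix //.
rewrite (dicke_mix_weight k lam (u' := prefix_bits n a) (v' := prefix_bits n b)) ?weight_prefix //.
have card_T : (#|T| <= k)%N by rewrite card_prefix ?geq_max ?le_an ?le_uk.
have /eqP := sig_marg card_T (prefix_bits n a) (prefix_bits n b).
rewrite -subr_eq0 /ptrace -sumrB.
have c0 : [forall l in T, [ffun => false] l == false] by apply/forall_inP => l _; rewrite ffunE.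
rewrite (bigD1 _ c0) /= !merge_prefix ?leq_maxl ?leq_maxr //.
rewrite big1 ?addr0 => [/eqP // | c /andP[cT nz_c]].
apply: IHd; rewrite weight_merge // ?weight_prefix //; last first.
  by move=> l; rewrite ffunE inE => /leq_trans; apply; apply: leq_maxl.
have : weight c != 0%N by apply: contra_neq nz_c => /weight_eq0->.
lia.
Qed.

End Determination.

Lemma dicke_mix_determined_by_small_marginals (C : numClosedFieldType) (n k : nat)
    (lam : nat -> C) (i0 : nat) :
  (0 < k)%N -> (i0 <= k)%N -> ~~ odd (k - i0) -> lam i0 = 0 ->
  determines (@dicke_mix C n k lam) [set S : {set 'I_n} | (#|S| <= k)%N].
Proof.
move=> k_gt0 le_i0k even_ki0 lam_i0 sig [sig_herm sig_psd _] sig_marg s t.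
apply: (sig_eq_rho k_gt0 le_i0k even_ki0 lam_i0 sig_herm sig_psd) => S cardS.
by apply: sig_marg; rewrite inE.
Qed.

Lemma L_le_max_card (C : numClosedFieldType) n (rho : op C n) (F : {set {set 'I_n}}) :
  determines rho F -> (L rho <= \max_(S in F) #|S|)%N.
Proof.
move=> detF; rewrite /L -minEnat.
by apply: (@bigmin_le_cond _ nat _ _ F) => /=; apply/asboolP.
Qed.

Theorem mainTheorem20 (C : numClosedFieldType) (n k : nat) (lam : nat -> C) :
  (1 <= k)%N -> (k <= n)%N ->
  (forall i, (i <= k)%N -> 0 <= lam i) ->
  \sum_(i < k.+1) lam i = 1 ->
  (exists i, [/\ (i <= k)%N, ~~ odd (k - i) & lam i = 0]) ->
  (L (@dicke_mix C n k lam) <= k)%N.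
Proof.
move=> k_gt0 _ _ _ [i0 [le_i0k even_ki0 lam_i0]].
have detk := @dicke_mix_determined_by_small_marginals C n k lam i0 k_gt0 le_i0k even_ki0 lam_i0.
apply: leq_trans (L_le_max_card detk) _.
by apply/bigmax_leqP => S; rewrite inE.
Qed.
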